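(* Let $T$ be a Boolean algebra (with order $\le$, meet $\land$, join $\lor$ and complement $\neg$), and let $(a,g)$ and $(a',g')$ be contracts over $T$. Let $\mathcal{C}_q=(a_q,g_q)$ be the quotient $(a,g)/(a',g')$, given by $$a_q=a\land(\neg a'\lor g'),\qquad g_q=(a'\land g)\lor\neg a\lor(a'\land\neg g').$$ Suppose that $a''\in T$ satisfies $a_q\le a''$, and that $g'',g'''\in T$ satisfy $a'\land g'\land g''\le a'\land g'\land g$ and $g'''\land a\le a'\land g''\land a$. Then the contract $(a'',g''')$ is a refinement of $\mathcal{C}_q$, i.e. $(a'',g''')\le\mathcal{C}_q$.
   Context: A contract over a Boolean algebra $T$ (the ''term algebra'') is a pair $(a,g)$ of elements of $T$, called assumptions and guarantees. Contracts are ordered by refinement: for contracts $\mathcal{C}=(a,g)$ and $\mathcal{C}'=(a',g')$, $\mathcal{C}\le\mathcal{C}'$ (read ''$\mathcal{C}$ is a refinement of $\mathcal{C}'$'') holds iff $a'\le a$ and $g\lor\neg a\le g'\lor\neg a'$. *)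

From mathcomp Require Import all_boot all_order.
Set Implicit Arguments. Unset Strict Implicit. Unset Printing Implicit Defensive.
Import Order.TTheory.
Local Open Scope order_scope.

(* A Boolean algebra is a complemented distributive lattice with top and
   bottom: MathComp's ctbDistrLatticeType. *)

(* A contract over T: pair (assumptions, guarantees). *)
Definition contract (d : Order.disp_t) (T : ctbDistrLatticeType d) := (T * T)%type.

Definition refines (d : Order.disp_t) (T : ctbDistrLatticeType d)
  (C C' : contract T) : Prop :=
  (C'.1 <= C.1) /\ (C.2 `|` ~` C.1 <= C'.2 `|` ~` C'.1).

Definition quotient (d : Order.disp_t) (T : ctbDistrLatticeType d)
  (C C' : contract T) : contract T :=
  let: (a, g) := C in let: (a', g') := C' in
  (a `&` (~` a' `|` g'), (a' `&` g) `|` ~` a `|` (a' `&` ~` g')).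

From mathcomp Require Import all_boot all_order.
Import Order.Theory.
Set Implicit Arguments.
Unset Strict Implicit.
Unset Printing Implicit Defensive.

Local Open Scope order_scope.

(* Weakening the assumptions and strengthening the guarantees refines a
   contract, so with [a_q <= a''] it suffices to show [g''' <= g_q].  Split
   [g'''] along [a] and [a' `&` g''] along [g']: the hypotheses send the
   pieces into the joinands [a' `&` g], [~` a] and [a' `&` ~` g'] of [g_q]. *)

Section ContractQuotient.
Variables (d : Order.disp_t) (T : ctbDistrLatticeType d).
Implicit Types (x y z : T) (C D : contract T).

Lemma leIC_UC x y z : (x `&` z <= y) = (x <= y `|` ~` z).
Proof. by rewrite -[z in LHS]complK -diffE leBLR joinC. Qed.

Lemma refines_le C D : D.1 <= C.1 -> C.2 <= D.2 -> refines C D.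
Proof. by move=> leA leG; split=> //; apply: leU2; rewrite ?leC. Qed.

Lemma meet_le_joinIC (a' g g' g'' : T) :
  a' `&` g' `&` g'' <= a' `&` g' `&` g ->
  a' `&` g'' <= (a' `&` g) `|` (a' `&` ~` g').
Proof.
move=> hg''; rewrite -[a' `&` g'' in X in X <= _](joinIB g') diffE.
apply: leU2; last by rewrite -meetA leI2 ?leIr.
rewrite -meetA [g'' `&` g']meetC meetA.
by apply: le_trans hg'' _; rewrite -meetA leI2 ?leIr.
Qed.

Lemma quotient_guarantee_ge (a g a' g' g'' g''' : T) :
  a' `&` g' `&` g'' <= a' `&` g' `&` g ->
  g''' `&` a <= a' `&` g'' `&` a ->
  g''' <= (quotient (a, g) (a', g')).2.
Proof.
move=> hg'' hg'''; rewrite /= joinAC -leIC_UC.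
by apply: le_trans hg''' _; apply/leIxl/meet_le_joinIC.
Qed.

End ContractQuotient.

Theorem theorem2 (d : Order.disp_t) (T : ctbDistrLatticeType d)
  (a g a' g' a'' g'' g''' : T) :
  (quotient (a, g) (a', g')).1 <= a'' ->
  a' `&` g' `&` g'' <= a' `&` g' `&` g ->
  g''' `&` a <= a' `&` g'' `&` a ->
  refines (a'', g''') (quotient (a, g) (a', g')).
Proof.
move=> ha'' hg'' hg'''; apply: refines_le => //.
exact: quotient_guarantee_ge hg'' hg'''.
Qed.
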